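(* Let $\tau \ge 2$ be an integer and let $(X,\mathcal{B})$ be a $3$-$(v,k,1)$-design with $k \ge \tau(\tau-1)+1$. Let $\sigma = \tau k - \tau(\tau-1)$. Then the union of any $\tau$ distinct blocks contains at least $\sigma$ points and the union of any $\tau-1$ blocks contains at most $\sigma-1$ points; consequently, using a base $(\sigma,v)$-threshold scheme with this distribution design yields an expanded threshold scheme with threshold $\tau$.
   Context: A $t$-$(v,k,\lambda)$-design is a set $X$ of $v$ points together with a collection $\mathcal{B}$ of $k$-subsets of $X$ (blocks) such that every $t$-subset of $X$ lies in exactly $\lambda$ blocks. A distribution design $(X,\mathcal{B})$ with $|X|=m$, $|\mathcal{B}|=n$ combined with a base $(\sigma,m)$-threshold scheme gives each player (one per block) the subshares indexed by the points of its block; if the union of any $\tau$ blocks has at least $\sigma$ points and the union of any $\tau-1$ blocks has at most $\sigma-1$ points, the resulting expanded scheme is a $(\tau,n)$-threshold scheme. *)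

From mathcomp Require Import all_boot.
Set Implicit Arguments. Unset Strict Implicit. Unset Printing Implicit Defensive.

(* Blocks are stored as a set of sets (for t = 3,
   lambda = 1, k >= 3 there can be no repeated blocks anyway). *)
Definition is_design (T : finType) (t v k lambda : nat) (B : {set {set T}}) : Prop :=
  [/\ #|T| = v,
      (forall b, b \in B -> #|b| = k) &
      (forall S : {set T}, #|S| = t -> #|[set b in B | S \subset b]| = lambda)].

Definition sigma_thr (tau k : nat) : nat := tau * k - tau * (tau - 1).

Definition distribution_threshold (T : finType) (B : {set {set T}}) (tau sigma : nat) : Prop :=
  (forall Bs : {set {set T}}, Bs \subset B -> #|Bs| = tau ->
      sigma <= #|\bigcup_(b in Bs) b|) /\
  (forall Bs : {set {set T}}, Bs \subset B -> #|Bs| = tau.-1 ->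
      #|\bigcup_(b in Bs) b| <= sigma.-1).

From mathcomp Require Import all_boot.
From mathcomp Require Import zify.

Set Implicit Arguments. Unset Strict Implicit. Unset Printing Implicit Defensive.

(* In a 3-(v,k,1)-design two distinct blocks share at most two points, so
   adding a block to i others adds at least k - 2i new points; summing,
   tau blocks cover at least tau k - tau (tau - 1) = sigma points.  On the
   other side tau - 1 blocks cover at most (tau - 1) k points, which is
   below sigma exactly when k > tau (tau - 1). *)

Lemma leq_card_bigcup (T I : finType) (P : {pred I}) (F : I -> {set T}) :
  #|\bigcup_(i in P) F i| <= \sum_(i in P) #|F i|.
Proof.
elim/big_rec2: _ => [|i n U _ leUn]; first by rewrite cards0.
by rewrite (leq_trans (leq_card_setU (F i) U).1) ?leq_add2l.
Qed.

Lemma mul2_bin2 n : 2 * 'C(n, 2) = n * n.-1.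
Proof. by rewrite mulnC -[2]/(2`!) bin_ffact ffactnS ffactn1. Qed.

Lemma card_cover_leq (T : finType) (k : nat) (P : {set {set T}}) :
  {in P, forall A : {set T}, #|A| = k} -> #|cover P| <= #|P| * k.
Proof.
move=> card_P; rewrite (leq_trans (leq_card_cover P)) //.
by rewrite (eq_bigr (fun=> k)) ?sum_nat_const.
Qed.

Lemma card_cover_geq (T : finType) (k m : nat) (P : {set {set T}}) :
  {in P, forall A : {set T}, #|A| = k} ->
  {in P &, forall A B : {set T}, A != B -> #|A :&: B| <= m} ->
  #|P| * k <= #|cover P| + m * 'C(#|P|, 2).
Proof.
move: {2}#|P| (erefl #|P|) => n.
elim: n P => [|n IHn] P card_P_eq card_P meet_P; first by rewrite card_P_eq.
have /card_gt0P [A PA] : 0 < #|P| by rewrite card_P_eq.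
have card_PA : #|P :\ A| = n by move: card_P_eq; rewrite (cardsD1 A) PA => -[].
have sub_P : {subset P :\ A <= P} by move=> B /setD1P [].
have IH := IHn (P :\ A) card_PA (fun B => card_P B \o sub_P B)
  (fun B C PB PC => meet_P B C (sub_P B PB) (sub_P C PC)).
have meet_A : #|A :&: cover (P :\ A)| <= n * m.
  have sub_meets : A :&: cover (P :\ A) \subset \bigcup_(B in P :\ A) (A :&: B).
    apply/subsetP => x /setIP [Ax /bigcupP [B PB Bx]].
    by apply/bigcupP; exists B => //; rewrite inE Ax Bx.
  rewrite (leq_trans (subset_leq_card sub_meets)) // (leq_trans (leq_card_bigcup _ _)) //.
  rewrite -card_PA -sum_nat_const leq_sum // => B /setD1P [neq_BA PB].
  by rewrite meet_P // eq_sym.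
have card_A := card_P A PA.
have cover_P : cover P = A :|: cover (P :\ A) by rewrite /cover (big_setD1 A PA).
have := cardsUI A (cover (P :\ A)); rewrite -cover_P card_A.
rewrite card_P_eq card_PA in IH *; rewrite binS bin1; lia.
Qed.

Lemma design_card_block (T : finType) t v k lambda (B : {set {set T}}) b :
  is_design t v k lambda B -> b \in B -> #|b| = k.
Proof. by case=> _ card_B _; apply: card_B. Qed.

Lemma design_card_meet (T : finType) t v k (B : {set {set T}}) :
  is_design t v k 1 B -> {in B &, forall b b', b != b' -> #|b :&: b'| < t}.
Proof.
move=> [_ _ count_B] b b' Bb Bb' neq_bb'; rewrite ltnNge; apply/negP.
case/card_geqP => s [uniq_s size_s sub_s].
have card_S : #|[set x in s]| = t by rewrite cardsE (card_uniqP uniq_s).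
have sub_S (c : {set T}) : b :&: b' \subset c -> [set x in s] \subset c.
  by move=> sub_c; apply/subsetP => x; rewrite inE => /sub_s /(subsetP sub_c).
have : 1 < #|[set c in B | [set x in s] \subset c]|.
  by apply/card_gt1P; exists b, b'; rewrite !inE Bb Bb' !sub_S ?subsetIl ?subsetIr.
by rewrite count_B.
Qed.

Theorem mainTheorem6 (T : finType) (v k tau : nat) (B : {set {set T}}) :
  2 <= tau ->
  is_design 3 v k 1 B ->
  tau * (tau - 1) + 1 <= k ->
  distribution_threshold B tau (sigma_thr tau k).
Proof.
move=> tau_ge2 design_B k_large; rewrite /sigma_thr.
have card_Bs (Bs : {set {set T}}) : Bs \subset B -> {in Bs, forall b : {set T}, #|b| = k}.
  by move=> /subsetP sub_Bs b /sub_Bs; apply: design_card_block design_B.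
split=> Bs sub_Bs card_Bs_eq; rewrite -/(cover Bs).
- have meet_Bs : {in Bs &, forall b b' : {set T}, b != b' -> #|b :&: b'| <= 2}.
    move=> b b' /(subsetP sub_Bs) Bb /(subsetP sub_Bs) Bb'.
    exact: (design_card_meet design_B Bb Bb').
  have := card_cover_geq (card_Bs _ sub_Bs) meet_Bs.
  by rewrite card_Bs_eq mul2_bin2; lia.
- have := card_cover_leq (card_Bs _ sub_Bs); rewrite card_Bs_eq.
  by move=> /leq_trans; apply; nia.
Qed.
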